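(* Let $r\ge2$ and let $t\ge3$ be an odd integer. Let $(X,\mathcal A)$ be a $(k_{t-1},b_r)$ resolvable configuration and let $E$ be a subset of $X$ with $|E|=t$. Then there exists a line $A\in\mathcal A$ with $|E\cap A|=1$.
   Context: A $(k_{t-1},b_r)$ configuration is a pair $(X,\mathcal A)$ where $X$ is a set of $k$ points and $\mathcal A$ is a collection of $b$ subsets of $X$ (lines) such that each line contains exactly $r$ points, each point belongs to exactly $t-1$ lines, and every pair of distinct points belongs to at most one line. It is resolvable if the lines can be partitioned into $t-1$ parallel classes, a parallel class being a set of lines that partitions $X$. *)

From mathcomp Require Import all_boot.
Set Implicit Arguments. Unset Strict Implicit. Unset Printing Implicit Defensive.

(* A (k_{t-1}, b_r) configuration on the point set X (k = #|X|, b = #|L|):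
   L is the collection of lines (subsets of X). *)
Definition configuration (X : finType) (L : {set {set X}}) (r t : nat) : Prop :=
  [/\ (forall A, A \in L -> #|A| = r),
      (forall x : X, #|[set A in L | x \in A]| = t.-1) &
      (forall x y : X, x != y -> #|[set A in L | (x \in A) && (y \in A)]| <= 1)].

Definition parallel_class (X : finType) (C : {set {set X}}) : Prop :=
  forall x : X, #|[set A in C | x \in A]| = 1.

Definition resolvable (X : finType) (L : {set {set X}}) (t : nat) : Prop :=
  exists P : 'I_(t.-1) -> {set {set X}},
    [/\ (forall i, parallel_class (P i)),
        (forall A, A \in L -> exists2 i, A \in P i & forall j, A \in P j -> j = i) &
        (forall i A, A \in P i -> A \in L)].

From mathcomp Require Import all_boot.

Set Implicit Arguments.
Unset Strict Implicit.
Unset Printing Implicit Defensive.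

(* Suppose no line meets E in exactly one point, and let x be in E. Each of
   the t-1 lines through x then contains a second point of E, and two points
   lie on at most one line, so these t-1 lines share out the t-1 other points
   of E with at least one each: every line through a point of E meets E in
   exactly two points. A parallel class partitions E into such pairs, which
   is impossible since t is odd. *)

Lemma sum_pos_le_card_eq1 (I : finType) (P : {pred I}) (F : I -> nat) :
  (forall i, i \in P -> 0 < F i) -> \sum_(i in P) F i <= #|P| ->
  forall i, i \in P -> F i = 1.
Proof.
move=> F_gt0 sumF_le i Pi.
have := leqif_sum (fun j (Pj : j \in P) => leqif_eq (F_gt0 j Pj)).
rewrite sum1_card => /geq_leqif.
by rewrite sumF_le => /esym/forall_inP/(_ i Pi)/eqP.
Qed.

Lemma card_set_in_sum (T : finType) (D : {set T}) (p : pred T) :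
  #|[set y in D | p y]| = \sum_(y in D) p y.
Proof.
rewrite -sum1_card big_mkcond [RHS]big_mkcond /=.
by apply: eq_bigr => y _; rewrite !inE; case: (y \in D); case: (p y).
Qed.

Section Incidences.

Variable X : finType.
Implicit Types (x y : X) (E A : {set X}) (S : {set {set X}}).

Definition pencil S x := [set A in S | x \in A].

Lemma sum_card_pencil S E :
  \sum_(x in E) #|pencil S x| = \sum_(A in S) #|E :&: A|.
Proof.
under eq_bigr do rewrite /pencil card_set_in_sum.
rewrite exchange_big; apply: eq_bigr => A _.
exact/esym/(card_set_in_sum E (mem A)).
Qed.

Lemma card_parallel_class_sum C E :
  parallel_class C -> #|E| = \sum_(A in C) #|E :&: A|.
Proof.
move=> C_class; rewrite -sum_card_pencil -sum1_card.
by apply: eq_bigr => x _; rewrite /pencil C_class.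
Qed.

Lemma parallel_class_even C E :
  parallel_class C -> (forall A, A \in C -> ~~ odd #|E :&: A|) -> ~~ odd #|E|.
Proof.
move=> C_class even_meet; rewrite (card_parallel_class_sum E C_class).
apply: (big_ind (fun n => ~~ odd n)) => // m n m_even n_even.
by rewrite oddD (negbTE m_even) (negbTE n_even).
Qed.

Lemma card_setI_D1 E A x :
  x \in E -> x \in A -> #|E :&: A| = #|(E :\ x) :&: A|.+1.
Proof. by move=> xE xA; rewrite (cardsD1 x) inE xE xA setIDAC. Qed.

Variable L : {set {set X}}.
Hypothesis two_points_one_line :
  forall x y, x != y -> #|[set A in L | (x \in A) && (y \in A)]| <= 1.

Variable E : {set X}.
Hypothesis no_tangent : forall A, A \in L -> #|E :&: A| != 1.

Lemma sum_card_pencil_meet_le x :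
  x \in E -> \sum_(A in pencil L x) #|(E :\ x) :&: A| <= #|E|.-1.
Proof.
move=> xE; rewrite -sum_card_pencil (cardsD1 x E) xE add1n -sum1_card.
apply: leq_sum => y; rewrite !inE => /andP[y_neq_x _].
have -> : pencil (pencil L x) y = [set A in L | (x \in A) && (y \in A)].
  by apply/setP => A; rewrite !inE andbA.
by apply: two_points_one_line; rewrite eq_sym.
Qed.

Lemma pencil_meet_card2 x A :
  x \in E -> #|pencil L x| = #|E|.-1 -> A \in pencil L x -> #|E :&: A| = 2.
Proof.
move=> xE deg_x A_x; have xA : x \in A by move: A_x; rewrite inE => /andP[].
rewrite (card_setI_D1 xE xA); congr _.+1.
apply: (sum_pos_le_card_eq1 (F := fun B => #|(E :\ x) :&: B|) _ _ A_x).
  move=> B; rewrite inE => /andP[B_L xB].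
  have := no_tangent B_L; rewrite (card_setI_D1 xE xB) lt0n.
  by apply: contraNneq => ->.
exact: leq_trans (sum_card_pencil_meet_le xE) (eq_leq (esym deg_x)).
Qed.

Lemma line_meet_even A :
  (forall x, x \in E -> #|pencil L x| = #|E|.-1) ->
  A \in L -> ~~ odd #|E :&: A|.
Proof.
move=> deg_E A_L.
have [-> | [x]] := set_0Vmem (E :&: A); first by rewrite cards0.
rewrite inE => /andP[xE xA].
by rewrite (pencil_meet_card2 xE (deg_E x xE)) // inE A_L xA.
Qed.

End Incidences.

Theorem lemma11 (X : finType) (L : {set {set X}}) (r t : nat) :
  2 <= r -> 3 <= t -> odd t ->
  configuration L r t -> resolvable L t ->
  forall E : {set X}, #|E| = t ->
  exists2 A, A \in L & #|E :&: A| = 1.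
Proof.
move=> _ t_ge3 t_odd [_ deg_t pair_L] [P [P_class _ P_L]] E card_E.
have [/exists_inP[A A_L /eqP] | /exists_inPn no_tangent] :=
  boolP [exists A in L, #|E :&: A| == 1]; first by exists A.
have i0 : 'I_t.-1 by exists 0; rewrite -ltnS prednK // ltnW // ltnW.
have deg_E x : x \in E -> #|pencil L x| = #|E|.-1.
  by rewrite card_E => _; apply: deg_t.
suff : ~~ odd #|E| by rewrite card_E t_odd.
apply: (parallel_class_even (P_class i0)) => A /P_L.
exact: (line_meet_even pair_L no_tangent deg_E).
Qed.
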